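(* Let $d\ge1$. For integers $0\le m\le n$, $0\le j\le m/2$ and $1\le\ell\le\dim\mathcal H_{m-2j}^d$, $$Q_{m,j,\ell}^{n,-1} = a_{m,j}\Big[\big(Q_{m,j,\ell}^{n,0}-b_{m,n}Q_{m-2,j-1,\ell}^{n,0}\big) - 2\big(Q_{m,j,\ell}^{n-1,0}-c_{m,n}Q_{m-2,j-1,\ell}^{n-1,0}\big) + \big(Q_{m,j,\ell}^{n-2,0}-d_{m,n}Q_{m-2,j-1,\ell}^{n-2,0}\big)\Big],$$ where $a_{m,j}=\frac{2m-2j+d-2}{2m+d-2}$ (with $a_{0,0}=1$ when $d=2$), $b_{m,n}=(n-m+1)(n-m+2)$, $c_{m,n}=(n+m+d-2)(n-m+1)$ and $d_{m,n}=(n+m+d-2)(n+m+d-3)$.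
   Context: For real $\alpha$ define $L_n^{\alpha}(t)=\sum_{k=0}^n \frac{(\alpha+k+1)_{n-k}}{(n-k)!}\frac{(-t)^k}{k!}$, and for real $\alpha,\beta$ define $P_n^{(\alpha,\beta)}(s)=\sum_{k=0}^n \frac{(\alpha+k+1)_{n-k}(n+\alpha+\beta+1)_k}{k!\,(n-k)!}\left(\frac{s-1}{2}\right)^k$ (classical Laguerre and Jacobi polynomials, extended polynomially in the parameters); $(a)_k$ is the Pochhammer symbol. For an integer $p\ge0$, $\mathcal H_p^d$ is the space of homogeneous harmonic polynomials of degree $p$ in $d$ variables (for $d=1$: $\mathcal H_0^1=\mathrm{span}\{1\}$, $\mathcal H_1^1=\mathrm{span}\{x\}$, $\mathcal H_p^1=\{0\}$ for $p\ge2$), and $\{Y_\ell^p\}$ is an orthonormal basis of it with respect to the normalized surface measure on the unit sphere $\mathbb S^{d-1}$. For $\mu\ge-1$ and integers $0\le m\le n$, $0\le j\le m/2$, $1\le \ell\le \dim\mathcal H^d_{m-2j}$, $$Q_{m,j,\ell}^{n,\mu}(x,t)=L_{n-m}^{2m+2\mu+d}(t)\,t^{2j}\,P_j^{(\mu,\,m-2j+\frac{d-2}{2})}\!\left(2\frac{\|x\|^2}{t^2}-1\right)Y_\ell^{m-2j}(x),\qquad x\in\mathbb R^d,\ t\in\mathbb R.$$ Convention: $Q_{m',j',\ell}^{n',\mu}:=0$ whenever $m'<0$, $j'<0$, or $n'<m'$. *)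

From HB Require Import structures.
From mathcomp Require Import all_boot all_order all_algebra.
From mathcomp Require Import mpoly.
From mathcomp Require Import ring.
Set Implicit Arguments. Unset Strict Implicit. Unset Printing Implicit Defensive.
Import Order.TTheory GRing.Theory Num.Theory.
Local Open Scope ring_scope.

Section Defs.
Variable R : realFieldType.

Definition poch (a : R) (k : nat) : R := \prod_(i < k) (a + i%:R).

Definition laguerre (n : nat) (al t : R) : R :=
  \sum_(k < n.+1) (poch (al + k%:R + 1) (n - k) / (n - k)`!%:R)
                  * ((- t) ^+ k / k`!%:R).

Definition jacobi (n : nat) (al be s : R) : R :=
  \sum_(k < n.+1) (poch (al + k%:R + 1) (n - k) * poch (n%:R + al + be + 1) k
                   / (k`!%:R * (n - k)`!%:R)) * ((s - 1) / 2) ^+ k.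

(* The polynomial  t^(2j) P_j^(al,be)(2 r / t^2 - 1), written without the
   division: t^(2j) ((2r/t^2 - 1 - 1)/2)^k = (r - t^2)^k t^(2(j-k)).
   See jacobi_homE below: it agrees with the literal expression for t <> 0. *)
Definition jacobi_hom (j : nat) (al be r t : R) : R :=
  \sum_(k < j.+1) (poch (al + k%:R + 1) (j - k) * poch (j%:R + al + be + 1) k
                   / (k`!%:R * (j - k)`!%:R)) * ((r - t ^+ 2) ^+ k * t ^+ (2 * (j - k))).

Lemma jacobi_homE j al be r t : t != 0 ->
  jacobi_hom j al be r t = t ^+ (2 * j) * jacobi j al be (2 * r / t ^+ 2 - 1).
Proof.
move=> t0; rewrite /jacobi_hom /jacobi mulr_sumr; apply: eq_bigr => k _.
rewrite [RHS]mulrCA; congr (_ * _).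
have hk : (k <= j)%N by rewrite -ltnS.
have -> : (2 * r / t ^+ 2 - 1 - 1) / 2 = (r - t ^+ 2) / t ^+ 2.
  by field; rewrite ?expf_neq0.
rewrite expr_div_n; set jk := (j - k)%N.
have -> : (2 * j = 2 * jk + 2 * k)%N by rewrite -mulnDr subnK.
rewrite exprD -exprM; field; by rewrite expf_neq0.
Qed.

Variable d : nat.

Definition sqnorm (x : 'I_d -> R) : R := \sum_(i < d) x i ^+ 2.

Definition laplacian (Y : {mpoly R[d]}) : {mpoly R[d]} :=
  \sum_(i < d) mderiv i (mderiv i Y).

Definition harmonic_homog (p : nat) (Y : {mpoly R[d]}) : bool :=
  (Y \is p.-homog) && (laplacian Y == 0).

(* Q_{m,j,l}^{n,mu}(x,t) with Y = Y_l^{m-2j}; indices are integers and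
   Q := 0 whenever m < 0, j < 0 or n < m. *)
Definition Qpoly (mu : R) (n m j : int) (Y : {mpoly R[d]}) (x : 'I_d -> R) (t : R) : R :=
  if (m < 0) || (j < 0) || (n < m) then 0 else
  let n' := `|n|%N in let m' := `|m|%N in let j' := `|j|%N in
  laguerre (n' - m') (2 * m'%:R + 2 * mu + d%:R) t
  * jacobi_hom j' mu ((m' - 2 * j')%N%:R + (d%:R - 2) / 2) (sqnorm x) t
  * Y.@[x].

Definition acoef (m j : nat) : R :=
  if (m == 0%N) && (d == 2%N) then 1
  else (2 * m%:R - 2 * j%:R + d%:R - 2) / (2 * m%:R + d%:R - 2).

Definition bcoef (m n : nat) : R := (n%:R - m%:R + 1) * (n%:R - m%:R + 2).
Definition ccoef (m n : nat) : R := (n%:R + m%:R + d%:R - 2) * (n%:R - m%:R + 1).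
Definition dcoef (m n : nat) : R := (n%:R + m%:R + d%:R - 2) * (n%:R + m%:R + d%:R - 3).

End Defs.

From mathcomp Require Import all_boot all_order all_algebra.
From mathcomp Require Import mpoly.
From mathcomp Require Import ring zify lra.
Set Implicit Arguments. Unset Strict Implicit.
Import Order.TTheory GRing.Theory Num.Theory.
Local Open Scope ring_scope.

(* Q^mu factors as L_{n-m}^{2m+2mu+d}(t) times t^{2j} P_j^{(mu,beta)} times Y, so lowering
   mu from 0 to -1 acts separately on the two one-variable factors.  The Laguerre factor
   loses 2 from its parameter, and the contiguous relation L_N^al = L_N^{al+1} - L_{N-1}^{al+1},
   applied twice, gives the second difference Q^0_n - 2 Q^0_{n-1} + Q^0_{n-2}.  The Jacobi
   factor satisfies (2j+beta) P_j^{(-1,beta)} = (j+beta) (P_j^{(0,beta)} - P_{j-1}^{(0,beta)}),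
   and (j+beta)/(2j+beta) is exactly a_{m,j}.  In homogeneous form the second term carries
   an extra t^2, which the three-term relation for t^2 L_N^{al+2} in terms of L_{N+2}^al,
   L_{N+1}^al, L_N^al turns into the terms Q^0_{m-2,j-1}, with the coefficients b, c, d. *)

Section Pochhammer.
Variable R : realFieldType.

Lemma poch0 (a : R) : poch a 0 = 1.
Proof. by rewrite /poch big_ord0. Qed.

Lemma pochSl (a : R) k : poch a k.+1 = a * poch (a + 1) k.
Proof.
rewrite /poch big_ord_recl addr0; congr (_ * _).
by apply: eq_bigr => i _; rewrite /bump /= natrD addrA.
Qed.

Lemma pochSr (a : R) k : poch a k.+1 = poch a k * (a + k%:R).
Proof. by rewrite /poch big_ord_recr. Qed.

Lemma poch_shift (a : R) k : poch a k * (a + k%:R) = a * poch (a + 1) k.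
Proof. by rewrite -pochSr pochSl. Qed.

Lemma natr_fact_neq0 k : (k`!%:R : R) != 0.
Proof. by rewrite pnatr_eq0 -lt0n fact_gt0. Qed.

End Pochhammer.

(* Discharges the side conditions of [field]: casts of factorials and of successors are nonzero. *)
Ltac field_nat := field; rewrite ?natr_fact_neq0 ?(addrC 1) ?natr1 ?pnatr_eq0.

Section Laguerre.
Variable R : realFieldType.
Implicit Types (a t : R) (n k : nat).

Definition laguerre_coef n a k : R :=
  poch (a + k%:R + 1) (n - k) / (n - k)`!%:R * ((-1) ^+ k / k`!%:R).

Definition laguerre_poly n a : {poly R} := \poly_(k < n.+1) laguerre_coef n a k.

Lemma horner_laguerre_poly n a t : (laguerre_poly n a).[t] = laguerre n a t.
Proof.
rewrite horner_poly; apply: eq_bigr => k _.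
by rewrite /laguerre_coef [(- t) ^+ _]exprNn; ring.
Qed.

Lemma laguerre_coef_lower n a k : (k <= n)%N ->
  laguerre_coef n.+1 a k = laguerre_coef n.+1 (a + 1) k - laguerre_coef n (a + 1) k.
Proof.
move=> /subnK <-.
rewrite /laguerre_coef -addSn !addnK.
have -> : a + 1 + k%:R + 1 = a + k%:R + 1 + 1 by ring.
rewrite pochSl pochSr factS natrM.
by field_nat.
Qed.

Lemma laguerre_poly_lower n a :
  laguerre_poly n.+1 a = laguerre_poly n.+1 (a + 1) - laguerre_poly n (a + 1).
Proof.
apply/polyP => k; rewrite coefB !coef_poly.
case: (ltnP k n.+1) => [hkn | hnk].
  by rewrite ltnS ltnW // laguerre_coef_lower.
case: ltnP => [hk | _]; last by rewrite subr0.
have -> : k = n.+1 by lia.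
by rewrite /laguerre_coef subnn !poch0 subr0.
Qed.

Lemma laguerre_coef0_mulX n a :
  (n%:R + a + 1) * laguerre_coef n a 0 = n.+1%:R * laguerre_coef n.+1 a 0.
Proof.
rewrite /laguerre_coef !subn0 pochSr factS natrM -natr1.
by field_nat.
Qed.

Lemma laguerre_coefS_mulX n a i : (i < n)%N ->
  laguerre_coef n (a + 1) i
  = (n%:R + a + 1) * laguerre_coef n a i.+1 - n.+1%:R * laguerre_coef n.+1 a i.+1.
Proof.
move=> hin; have [p ->] : exists p, n = (p + i.+1)%N.
  by exists (n - i.+1)%N; rewrite subnK.
rewrite /laguerre_coef.
have -> : (p + i.+1 - i = p.+1)%N by lia.
have -> : ((p + i.+1).+1 - i.+1 = p.+1)%N by lia.
rewrite addnK.
have -> : a + 1 + i%:R + 1 = a + i.+1%:R + 1 by rewrite -natr1; ring.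
rewrite pochSr !factS !natrM exprS !natrD -!natr1.
by field_nat.
Qed.

Lemma laguerre_coef_top_mulX n a :
  laguerre_coef n (a + 1) n = - (n.+1%:R * laguerre_coef n.+1 a n.+1).
Proof.
rewrite /laguerre_coef !subnn !poch0 factS natrM exprS -natr1.
by field_nat.
Qed.

Lemma mulX_laguerre_poly n a :
  'X * laguerre_poly n (a + 1)
  = (n%:R + a + 1) *: laguerre_poly n a - n.+1%:R *: laguerre_poly n.+1 a.
Proof.
apply/polyP => -[|i]; rewrite coefXM coefB !coefZ !coef_poly /=.
  by rewrite laguerre_coef0_mulX subrr.
rewrite !ltnS; case: (ltngtP i n) => [hin | _ | ->].
- exact: laguerre_coefS_mulX.
- by rewrite !mulr0 subr0.
- by rewrite laguerre_coef_top_mulX mulr0 sub0r.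
Qed.

Lemma laguerre0 a t : laguerre 0 a t = 1.
Proof. by rewrite /laguerre big_ord1 subnn poch0 expr0 fact0 invr1 !mulr1. Qed.

Lemma laguerre_lower n a t :
  laguerre n.+1 a t = laguerre n.+1 (a + 1) t - laguerre n (a + 1) t.
Proof. by rewrite -!horner_laguerre_poly laguerre_poly_lower hornerD hornerN. Qed.

Lemma mul_laguerre n a t :
  t * laguerre n (a + 1) t
  = (n%:R + a + 1) * laguerre n a t - n.+1%:R * laguerre n.+1 a t.
Proof.
rewrite -!horner_laguerre_poly -{1}(hornerX t) -hornerM mulX_laguerre_poly.
by rewrite hornerD hornerN !hornerZ.
Qed.

Lemma sqr_mul_laguerre n a t :
  t ^+ 2 * laguerre n (a + 2) t
  = (n.+1%:R * n.+2%:R) * laguerre n.+2 a t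
    - 2 * ((n%:R + a + 2) * n.+1%:R) * laguerre n.+1 a t
    + ((n%:R + a + 2) * (n%:R + a + 1)) * laguerre n a t.
Proof.
have -> : a + 2 = a + 1 + 1 by ring.
rewrite expr2 -mulrA mul_laguerre mulrBr mulrCA [t * (_ * _)]mulrCA !mul_laguerre.
rewrite -!natr1; ring.
Qed.

Definition laguerrez (N : int) a t : R := if N < 0 then 0 else laguerre `|N| a t.

Lemma laguerrez_nat n a t : laguerrez n%:Z a t = laguerre n a t.
Proof. by []. Qed.

Lemma laguerrez_lower N a t :
  laguerrez N a t = laguerrez N (a + 1) t - laguerrez (N - 1) (a + 1) t.
Proof.
rewrite /laguerrez; case: N => [[|k] | k] /=.
- by rewrite !laguerre0 subr0.
- by rewrite subn1 laguerre_lower.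
- by rewrite subr0.
Qed.

Lemma laguerrez_lower2 N a t :
  laguerrez N a t
  = laguerrez N (a + 2) t - 2 * laguerrez (N - 1) (a + 2) t + laguerrez (N - 2) (a + 2) t.
Proof.
rewrite [LHS]laguerrez_lower (laguerrez_lower N (a + 1)) (laguerrez_lower (N - 1) (a + 1)).
have -> : a + 1 + 1 = a + 2 by ring.
have -> : N - 1 - 1 = N - 2 by ring.
ring.
Qed.

Lemma laguerre_mul_sub_sqr n a t u v :
  laguerre n (a + 2) t * (u - t ^+ 2 * v)
  = (laguerre n (a + 2 + 2) t * u - (n.+1%:R * n.+2%:R) * laguerre n.+2 a t * v)
    - 2 * (laguerrez (n%:Z - 1) (a + 2 + 2) t * u
           - ((n%:R + a + 2) * n.+1%:R) * laguerre n.+1 a t * v)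
    + (laguerrez (n%:Z - 2) (a + 2 + 2) t * u
       - ((n%:R + a + 2) * (n%:R + a + 1)) * laguerre n a t * v).
Proof.
rewrite mulrBr mulrCA [t ^+ 2 * _]mulrA sqr_mul_laguerre.
by rewrite -laguerrez_nat laguerrez_lower2 laguerrez_nat; ring.
Qed.

End Laguerre.

Section Jacobi.
Variable R : realFieldType.
Implicit Types (al be r t : R) (j k : nat).

Definition jacobi_coef j al be k : R :=
  poch (al + k%:R + 1) (j - k) * poch (j%:R + al + be + 1) k / (k`!%:R * (j - k)`!%:R).

Lemma jacobi_hom_coefE j al be r t :
  jacobi_hom j al be r t
  = \sum_(k < j.+1) jacobi_coef j al be k * ((r - t ^+ 2) ^+ k * t ^+ (2 * (j - k))).
Proof. by []. Qed.

Lemma jacobi_hom0 al be r t : jacobi_hom 0 al be r t = 1.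
Proof.
by rewrite jacobi_hom_coefE big_ord1 /jacobi_coef !poch0 fact0 !mulr1 invr1 mulr1.
Qed.

Lemma jacobi_coef_lower j al be k : (k <= j)%N ->
  (2 * j.+1%:R + al + be) * jacobi_coef j.+1 (al - 1) be k
  = (j.+1%:R + al + be) * jacobi_coef j.+1 al be k
    - (j.+1%:R + be) * jacobi_coef j al be k.
Proof.
move=> hkj; have [p ->] : exists p, j = (p + k)%N by exists (j - k)%N; rewrite subnK.
rewrite /jacobi_coef addnK.
have -> : ((p + k).+1 - k = p.+1)%N by lia.
have -> : al - 1 + k%:R + 1 = al + k%:R by ring.
have -> : (p + k).+1%:R + (al - 1) + be + 1 = (p + k)%:R + al + be + 1.
  by rewrite -natr1; ring.
have -> : (p + k).+1%:R + al + be + 1 = (p + k)%:R + al + be + 1 + 1.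
  by rewrite -natr1; ring.
rewrite pochSl pochSr factS natrM.
case: k {hkj} => [|k].
  by rewrite !poch0 addn0 -!natr1; field_nat.
rewrite [poch (_ + be + 1) _]pochSl [poch (_ + be + 1 + 1) k.+1]pochSr factS natrM !natrD -!natr1.
by field_nat.
Qed.

Lemma jacobi_coef_top_lower j al be :
  (2 * j.+1%:R + al + be) * jacobi_coef j.+1 (al - 1) be j.+1
  = (j.+1%:R + al + be) * jacobi_coef j.+1 al be j.+1.
Proof.
rewrite /jacobi_coef subnn !poch0 !mul1r.
have -> : j.+1%:R + (al - 1) + be + 1 = j.+1%:R + al + be by ring.
have -> : 2 * j.+1%:R + al + be = j.+1%:R + al + be + j.+1%:R by ring.
by rewrite !mulrA -poch_shift [_ * poch _ _]mulrC.
Qed.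

Lemma jacobi_hom_lower j al be r t :
  (2 * j.+1%:R + al + be) * jacobi_hom j.+1 (al - 1) be r t
  = (j.+1%:R + al + be) * jacobi_hom j.+1 al be r t
    - (j.+1%:R + be) * (t ^+ 2 * jacobi_hom j al be r t).
Proof.
rewrite !jacobi_hom_coefE (big_ord_recr j.+1) [in RHS](big_ord_recr j.+1) /=.
rewrite mulrDr [in RHS]mulrDr [in RHS]addrAC; congr (_ + _); last first.
  by rewrite mulrA jacobi_coef_top_lower -mulrA.
rewrite !mulr_sumr -sumrB; apply: eq_bigr => -[k /= hkj] _.
rewrite subSn // mulnS exprD mulrA jacobi_coef_lower //.
ring.
Qed.

End Jacobi.

Section Qpoly.
Variables (R : realFieldType) (d : nat).

Definition Qbeta (m j : nat) : R := (m - 2 * j)%N%:R + (d%:R - 2) / 2.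

Lemma QpolyE mu (n : int) (m j : nat) (Y : {mpoly R[d]}) x t :
  Qpoly mu n m j Y x t
  = laguerrez (n - m%:Z) (2 * m%:R + 2 * mu + d%:R) t
    * jacobi_hom j mu (Qbeta m j) (sqnorm x) t * Y.@[x].
Proof.
rewrite /Qpoly /laguerrez /= subr_lt0.
case: ltP => [_ | hmn]; first by rewrite !mul0r.
by case: n hmn => // n hmn; rewrite subzn.
Qed.

Lemma Qpoly_negj mu n m (j : int) (Y : {mpoly R[d]}) x t :
  j < 0 -> Qpoly mu n m j Y x t = 0.
Proof. by move=> hj; rewrite /Qpoly hj orbT. Qed.

Lemma acoef0 m : (1 <= d)%N -> acoef R d m 0 = 1.
Proof.
move=> hd; rewrite /acoef; case: ifP => // hmd.
by rewrite mulr0 subr0 divff // subr_eq0 -natrM -natrD eqr_nat; lia.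
Qed.

Lemma Qbeta_lead_gt0 m j : (2 * j.+1 <= m)%N -> 0 < 2 * j.+1%:R + Qbeta m j.+1.
Proof.
move=> hjm; have hm2 : 2 <= m%:R :> R by rewrite (ler_nat R 2); lia.
have hd0 : 0 <= d%:R :> R := ler0n _ _.
by rewrite /Qbeta natrB // natrM; lra.
Qed.

Lemma acoefS m j : (2 * j.+1 <= m)%N ->
  acoef R d m j.+1 * (2 * j.+1%:R + Qbeta m j.+1) = j.+1%:R + Qbeta m j.+1.
Proof.
move=> hjm; have := Qbeta_lead_gt0 hjm.
rewrite /acoef ifF; last by lia.
rewrite /Qbeta natrB // natrM => hpos.
by field; apply: lt0r_neq0; lra.
Qed.

Lemma jacobi_hom_Qbeta_lower m j r t : (2 * j.+1 <= m)%N ->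
  jacobi_hom j.+1 (-1) (Qbeta m j.+1) r t
  = acoef R d m j.+1 * (jacobi_hom j.+1 0 (Qbeta m j.+1) r t
                        - t ^+ 2 * jacobi_hom j 0 (Qbeta m j.+1) r t).
Proof.
move=> hjm; have hc := lt0r_neq0 (Qbeta_lead_gt0 hjm).
apply: (mulfI hc); rewrite mulrA [_ * acoef _ _ _ _]mulrC acoefS //.
have := jacobi_hom_lower j 0 (Qbeta m j.+1) r t; rewrite !addr0 sub0r => ->.
by rewrite mulrBr.
Qed.

Lemma Qpoly_m1_j0 (n : int) (m : nat) (Y : {mpoly R[d]}) x t :
  Qpoly (-1) n m 0%N Y x t
  = Qpoly 0 n m 0%N Y x t - 2 * Qpoly 0 (n - 1) m 0%N Y x t + Qpoly 0 (n - 2) m 0%N Y x t.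
Proof.
rewrite !QpolyE !jacobi_hom0 laguerrez_lower2.
have -> : 2 * m%:R + 2 * -1 + d%:R + 2 = 2 * m%:R + 2 * 0 + d%:R :> R by ring.
have -> : n - 1 - m%:Z = n - m%:Z - 1 by ring.
have -> : n - 2 - m%:Z = n - m%:Z - 2 by ring.
ring.
Qed.

End Qpoly.

Section Proposition.
Variables (R : realFieldType) (d : nat) (Y : {mpoly R[d]}) (x : 'I_d -> R) (t : R).

Definition Qpoly_comb (n m j : nat) : R :=
  (Qpoly 0 n m j Y x t - bcoef R m n * Qpoly 0 n (m%:Z - 2) (j%:Z - 1) Y x t)
  - 2 * (Qpoly 0 (n%:Z - 1) m j Y x t
         - ccoef R d m n * Qpoly 0 (n%:Z - 1) (m%:Z - 2) (j%:Z - 1) Y x t)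
  + (Qpoly 0 (n%:Z - 2) m j Y x t
     - dcoef R d m n * Qpoly 0 (n%:Z - 2) (m%:Z - 2) (j%:Z - 1) Y x t).

Lemma Qpoly_m1_jS m N j : (2 * j.+1 <= m)%N ->
  Qpoly (-1) (m + N)%N m j.+1 Y x t = acoef R d m j.+1 * Qpoly_comb (m + N) m j.+1.
Proof.
move=> hj; rewrite /Qpoly_comb.
have hm : (2 <= m)%N by lia.
have -> : m%:Z - 2 = (m - 2)%N%:Z by lia.
have -> : j.+1%:Z - 1 = j%:Z by lia.
rewrite !QpolyE.
have -> : (m + N)%:Z - m%:Z = N by lia.
have -> : (m + N)%:Z - 1 - m%:Z = N%:Z - 1 by lia.
have -> : (m + N)%:Z - 2 - m%:Z = N%:Z - 2 by lia.
have -> : (m + N)%:Z - (m - 2)%N%:Z = N.+2 by lia.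
have -> : (m + N)%:Z - 1 - (m - 2)%N%:Z = N.+1 by lia.
have -> : (m + N)%:Z - 2 - (m - 2)%N%:Z = N by lia.
have -> : Qbeta R d (m - 2) j = Qbeta R d m j.+1 by rewrite /Qbeta; congr (_%:R + _); lia.
rewrite jacobi_hom_Qbeta_lower // !laguerrez_nat.
set a := 2 * (m - 2)%N%:R + 2 * 0 + d%:R.
have -> : 2 * m%:R + 2 * -1 + d%:R = a + 2 by rewrite /a natrB //; ring.
have -> : 2 * m%:R + 2 * 0 + d%:R = a + 2 + 2 by rewrite /a natrB //; ring.
rewrite mulrCA -mulrA laguerre_mul_sub_sqr.
have -> : bcoef R m (m + N) = N.+1%:R * N.+2%:R.
  by rewrite /bcoef natrD -!natr1; ring.
have -> : ccoef R d m (m + N) = (N%:R + a + 2) * N.+1%:R.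
  by rewrite /ccoef /a natrB // natrD -!natr1; ring.
have -> : dcoef R d m (m + N) = (N%:R + a + 2) * (N%:R + a + 1).
  by rewrite /dcoef /a natrB // natrD; ring.
ring.
Qed.

End Proposition.

Theorem proposition2p2 (R : realFieldType) (d : nat) (hd : (1 <= d)%N)
  (n m j : nat) (hmn : (m <= n)%N) (hj : (2 * j <= m)%N)
  (Y : {mpoly R[d]}) (hY : harmonic_homog (m - 2 * j) Y)
  (x : 'I_d -> R) (t : R) :
  Qpoly (-1) n m j Y x t =
  acoef R d m j *
    ((Qpoly 0 n m j Y x t
        - bcoef R m n * Qpoly 0 n (m%:Z - 2) (j%:Z - 1) Y x t)
     - 2 * (Qpoly 0 (n%:Z - 1) m j Y x t
        - ccoef R d m n * Qpoly 0 (n%:Z - 1) (m%:Z - 2) (j%:Z - 1) Y x t)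
     + (Qpoly 0 (n%:Z - 2) m j Y x t
        - dcoef R d m n * Qpoly 0 (n%:Z - 2) (m%:Z - 2) (j%:Z - 1) Y x t)).
Proof.
case: j hj hY => [|j] hj _.
  have Qpoly_jm1 mu n' m' : Qpoly mu n' m' (0%:Z - 1) Y x t = 0 by exact: Qpoly_negj.
  by rewrite !Qpoly_jm1 acoef0 // Qpoly_m1_j0; ring.
have [N ->] : exists N, n = (m + N)%N by exists (n - m)%N; rewrite subnKC.
exact: Qpoly_m1_jS.
Qed.
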